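(* Let $n\ge1$ and $D_n^{(\mathsf{cyc},\mathsf{exc})}(q,t)=\sum_{\sigma\in\mathfrak{D}_n}q^{\mathsf{cyc}\,\sigma}t^{\mathsf{exc}\,\sigma}$. Then $$D_{n}^{(\mathsf{cyc}, \mathsf{exc})}(q, t)=\left(\frac{1+xt}{1+x}\right)^{n}P^{(\mathsf{cyc}, \mathsf{cpk},\mathsf{exc})}\left(\mathfrak{D}_n; q, \frac{(1+x)^{2}t}{(x+t)(1+xt)},\frac{x+t}{1+xt}\right),$$ equivalently, $$P^{(\mathsf{cyc}, \mathsf{cpk},\mathsf{exc})}(\mathfrak{D}_n; q, x,t)=\left(\frac{1+u}{1+uv}\right)^{n}D_{n}^{(\mathsf{cyc}, \mathsf{exc})}(q, v),$$ where $u=\frac{1+t^{2}-2xt-(1-t)\sqrt{(1+t)^{2}-4xt}}{2(1-x)t}$ and $v=\frac{(1+t)^{2}-2xt-(1+t)\sqrt{(1+t)^{2}-4xt}}{2xt}$.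
   Context: $\mathfrak{D}_n$ is the set of derangements of $[n]$ (permutations with no fixed point). $P^{(\mathsf{stat}_1,\ldots,\mathsf{stat}_m)}(\Omega;t_1,\ldots,t_m)=\sum_{\sigma\in\Omega}\prod_j t_j^{\mathsf{stat}_j\sigma}$. For a permutation $\sigma$: $\mathsf{cyc}\,\sigma$ is its number of cycles, $\mathsf{exc}\,\sigma=\#\{i:\sigma(i)>i\}$, and $\mathsf{cpk}\,\sigma$ is the number of cyclic peaks, i.e. values $x$ with $\sigma^{-1}(x)<x>\sigma(x)$. *)

From HB Require Import structures.
From mathcomp Require Import all_boot all_order all_algebra all_fingroup.
Set Implicit Arguments. Unset Strict Implicit. Unset Printing Implicit Defensive.
Import Order.TTheory GRing.Theory Num.Theory.

(* Permutations of [n] are modelled by 'S_n = {perm 'I_n}; the shift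
   {1..n} -> {0..n-1} does not affect any of the statistics below. *)

Definition derangement n (s : 'S_n) : bool := [forall i, s i != i].

Definition cyc n (s : 'S_n) : nat := #|porbits s|.

Definition exc n (s : 'S_n) : nat := #|[set i : 'I_n | i < s i]|.

Definition cpk n (s : 'S_n) : nat :=
  #|[set x : 'I_n | ((s^-1)%g x < x) && (s x < x)]|.

Local Open Scope ring_scope.

Definition D_cyc_exc (R : comNzRingType) (n : nat) (q t : R) : R :=
  \sum_(s : 'S_n | derangement s) q ^+ cyc s * t ^+ exc s.

Definition P_cyc_cpk_exc (R : comNzRingType) (n : nat) (q x t : R) : R :=
  \sum_(s : 'S_n | derangement s) q ^+ cyc s * x ^+ cpk s * t ^+ exc s.

From mathcomp Require Import all_boot all_order all_algebra all_fingroup.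
From mathcomp Require Import zify ring.
Set Implicit Arguments. Unset Strict Implicit. Unset Printing Implicit Defensive.
Import Order.TTheory GRing.Theory Num.Theory.

(* Cyclic valley hopping.  Classify each value z of a permutation s by
   (s^-1 z < z, s z < z): cyclic peak, valley, double ascent or double descent.
   For each z, moving z to another place of its own cycle gives an involution
   [hop _ z] exchanging "z is a double descent" and "z is a double ascent" and
   preserving derangements, cycles and the type of every other value.  Hence,
   in a sum over derangements of q^cyc times a product of local weights of the
   types, double descents may be given weight 0 and double ascents the sum of
   both weights.  After this merging, the local weights of (cyc, exc) at t and
   of (cyc, cpk, exc) at the transformed point agree up to a factor
   (1 + x t)/(1 + x) per value and a power of b = (1 + x) t/(x + t) counting
   the true bits of the type, and these bits add up to n in a derangement.
   The second identity is the first one at (x, t) := (u, v), because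
   u + v = t (1 + u v) and (1 + u)^2 v = x t (1 + u v)^2. *)

Lemma find_iota0 (a : pred nat) N k :
  k < N -> a k -> (forall i, i < k -> ~~ a i) -> find a (iota 0 N) = k.
Proof.
move=> kN ak before_k.
rewrite (_ : N = k + (N - k.+1).+1); last by lia.
rewrite iotaD find_cat size_iota /= add0n ak addn0 ifN //.
by apply/hasPn => i; rewrite mem_iota add0n => /before_k.
Qed.

Lemma ord_ltn_eqF n (z w : 'I_n) : z < w -> (z == w) = false.
Proof. by rewrite -val_eqE; apply: ltn_eqF. Qed.

Lemma ord_gtn_eqF n (z w : 'I_n) : z < w -> (w == z) = false.
Proof. by rewrite -val_eqE; apply: gtn_eqF. Qed.

Lemma iter_perm_inj (T : finType) (s : {perm T}) k : injective (iter k s).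
Proof. by move=> a b; rewrite -!permX; apply: perm_inj. Qed.

Lemma mem_porbit1 (T : finType) (s : {perm T}) x : s x \in porbit s x.
Proof. by have := mem_porbit s 1 x; rewrite expg1. Qed.

Lemma porbit_subset (T : finType) (s r : {perm T}) :
  (forall x, r x \in porbit s x) -> forall x, porbit r x \subset porbit s x.
Proof.
move=> r_s x; apply/subsetP => y /porbitP [i ->].
elim: i => [|i IH]; first by rewrite expg0 perm1 porbit_id.
rewrite expgSr permM.
by have /eqP <- : porbit s ((r ^+ i)%g x) == porbit s x by rewrite eq_porbit_mem.
Qed.

Lemma porbits_eq_mem (T : finType) (s r : {perm T}) :
  (forall x, r x \in porbit s x) -> (forall x, s x \in porbit r x) ->
  porbits r = porbits s.
Proof.
move=> r_s s_r; apply: eq_imset => x.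
by apply/eqP; rewrite eqEsubset !porbit_subset.
Qed.

(** * Cyclic valley hopping *)

Section CyclicHop.
Variable n : nat.
Implicit Types (s : 'S_n) (z w : 'I_n).

(* (true, true): cyclic peak, (false, false): cyclic valley,
   (true, false): double ascent, (false, true): double descent. *)
Definition ctype s w := (((s^-1)%g w < w), (s w < w)).
Definition cdd s z := (z < (s^-1)%g z) && (s z < z).
Definition cda s z := ((s^-1)%g z < z) && (z < s z).

(* For a double descent z, the values s z, ..., s^m z with m = run_len s z
   are the maximal run below z that follows z in its cycle. *)
Definition run_len s z := find (fun j => z <= iter j.+1 s z) (iota 0 n).
Definition run_end s z := iter (run_len s z) s z.

(* Cut z out from between s^-1 z and s z and reinsert it after run_end s z,
   where it becomes a double ascent. *)
Definition hop_dd s z := (tperm z (run_end s z) * tperm ((s^-1)%g z) z * s)%g.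
Definition hop s z :=
  if cdd s z then hop_dd s z
  else if cda s z then ((hop_dd (s^-1)%g z)^-1)%g else s.

Lemma cdd_inv s z : cdd (s^-1)%g z = cda s z.
Proof. by rewrite /cdd /cda invgK andbC. Qed.

Lemma cda_cdd_excl s z : cda s z -> ~~ cdd s z.
Proof. by case/andP=> h1 h2; apply/negP=> /andP[]; lia. Qed.

Lemma ctype_cdd s z : (ctype s z == (false, true)) = cdd s z.
Proof.
rewrite /ctype /cdd; apply/eqP/andP => [[/negbT h1 h2]|[h1 h2]]; last first.
  by rewrite h2 ltnNge ltnW.
split=> //; rewrite ltn_neqAle leqNgt h1 andbT.
apply: contraTneq h2 => /val_inj/(congr1 s); rewrite permKV => ->.
by rewrite ltnn.
Qed.

Lemma ctype_cda s z : (ctype s z == (true, false)) = cda s z.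
Proof.
by rewrite -cdd_inv -ctype_cdd /ctype invgK; case: (_ < _) (_ < _) => [] [].
Qed.

Section DoubleDescent.
Variables (s : 'S_n) (z : 'I_n).
Hypothesis dd : cdd s z.

Lemma run_len_spec :
  [/\ 0 < run_len s z, run_len s z < n,
      forall j, 0 < j <= run_len s z -> iter j s z < z &
      z < iter (run_len s z).+1 s z].
Proof.
case/andP: dd => zVs sz.
set a := fun j => z <= iter j.+1 s z.
have has_a : has a (iota 0 n).
  apply/hasP; exists #|porbit s z|.-1.
    rewrite mem_iota add0n /=.
    have := max_card (mem (porbit s z)); rewrite card_ord.
    have := card_porbit_neq0 s z; case: #|_| => //= k _ hk; lia.
  by rewrite /a prednK ?lt0n ?card_porbit_neq0 // iter_porbit.
have lt_n : run_len s z < n by move: has_a; rewrite has_find size_iota.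
have a_len := nth_find 0 has_a; rewrite nth_iota // add0n /a in a_len.
have below : forall j, 0 < j <= run_len s z -> iter j s z < z.
  move=> [|j] // /andP[_ hj].
  have := before_find 0 hj; rewrite nth_iota ?add0n; last by lia.
  by rewrite /a ltnNge => ->.
have len_gt0 : 0 < run_len s z.
  by move: a_len; rewrite /run_len; case: find => //=; lia.
split=> //; rewrite ltn_neqAle a_len andbT.
apply: contraTneq zVs => /val_inj e.
suff <- : iter (run_len s z) s z = (s^-1)%g z.
  by rewrite -leqNgt ltnW // below // len_gt0 leqnn.
by apply: (@perm_inj _ s); rewrite permKV -iterS -e.
Qed.

Lemma run_end_bounds :
  [/\ run_end s z < z, z < (s^-1)%g z, s z < z & z < s (run_end s z)].
Proof.
have [len_gt0 _ below above] := run_len_spec; case/andP: dd => zVs sz.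
by split=> //; apply: below; rewrite len_gt0 leqnn.
Qed.

Lemma iter_run_neq i j : 0 < i -> i < j -> j <= run_len s z ->
  iter i s z != iter j s z.
Proof.
move=> i_gt0 ij j_le; have [_ _ below _] := run_len_spec.
apply/eqP => E.
have ez : z = iter (j - i) s z.
  by apply: (@iter_perm_inj _ s i); rewrite -iterD subnKC ?(ltnW ij).
suff /below : 0 < j - i <= run_len s z by rewrite -ez ltnn.
lia.
Qed.

Lemma hop_ddE w :
  hop_dd s z w = if w == (s^-1)%g z then s z else if w == run_end s z then z
                 else if w == z then s (run_end s z) else s w.
Proof.
have [ez zV _ _] := run_end_bounds.
have zV' : z != (s^-1)%g z by rewrite ord_ltn_eqF.
have eV : run_end s z != (s^-1)%g z by rewrite ord_ltn_eqF //; lia.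
have ez' : run_end s z != z by rewrite ord_ltn_eqF.
rewrite /hop_dd !permM.
case: eqVneq => [->|w1]; first by rewrite tpermD // tpermL.
case: eqVneq => [->|w2]; first by rewrite tpermR tpermR permKV.
case: eqVneq => [->|w3]; first by rewrite tpermL tpermD // eq_sym.
by rewrite tpermD 1?eq_sym // tpermD // eq_sym.
Qed.

Lemma hop_ddVE w :
  (hop_dd s z)^-1%g w = if w == s z then (s^-1)%g z else if w == z then run_end s z
                        else if w == s (run_end s z) then z else (s^-1)%g w.
Proof.
have [ez zV sz zse] := run_end_bounds.
apply: (@perm_inj _ (hop_dd s z)); rewrite permKV.
case: (eqVneq w (s z)) => [->|w1]; first by rewrite hop_ddE eqxx.
case: (eqVneq w z) => [->|w2]; first by rewrite hop_ddE ord_ltn_eqF ?eqxx //; lia.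
case: (eqVneq w (s (run_end s z))) => [->|w3].
  by rewrite hop_ddE ord_ltn_eqF // ord_gtn_eqF // eqxx.
have eqVE b : ((s^-1)%g w == b) = (w == s b).
  by rewrite -(inj_eq (@perm_inj _ s)) permKV.
by rewrite hop_ddE !eqVE permKV (negbTE w1) (negbTE w2) (negbTE w3) permKV.
Qed.

Lemma hop_dd_iter i : 0 < i <= run_len s z ->
  iter i (hop_dd s z) ((s^-1)%g z) = iter i s z.
Proof.
have [_ _ below _] := run_len_spec; have [_ zV _ _] := run_end_bounds.
elim: i => [|[|i] IH] // /andP[_ hi]; first by rewrite /= hop_ddE eqxx.
have zi : iter i.+1 s z < z by apply: below; lia.
rewrite iterS IH; last by lia.
rewrite hop_ddE ord_ltn_eqF; last by lia.
rewrite ifF; last by apply/negbTE/iter_run_neq.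
by rewrite ord_ltn_eqF.
Qed.

Lemma hop_dd_iter_last : iter (run_len s z).+1 (hop_dd s z) ((s^-1)%g z) = z.
Proof.
have [len_gt0 _ _ _] := run_len_spec; have [ez zV _ _] := run_end_bounds.
rewrite iterS hop_dd_iter ?len_gt0 ?leqnn // -/(run_end s z) hop_ddE.
by rewrite ord_ltn_eqF ?eqxx //; lia.
Qed.

Lemma hop_dd_z : hop_dd s z z = s (run_end s z).
Proof.
have [ez zV _ _] := run_end_bounds.
by rewrite hop_ddE ord_ltn_eqF // ord_gtn_eqF // eqxx.
Qed.

Lemma hop_ddV_z : (hop_dd s z)^-1%g z = run_end s z.
Proof. by have [_ _ sz _] := run_end_bounds; rewrite hop_ddVE ord_gtn_eqF ?eqxx. Qed.

Lemma cda_hop_dd : cda (hop_dd s z) z.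
Proof. by have [ez _ _ zse] := run_end_bounds; rewrite /cda hop_dd_z hop_ddV_z ez. Qed.

Lemma iter_hop_ddV j : j <= (run_len s z).+1 ->
  iter j ((hop_dd s z)^-1)%g z = iter ((run_len s z).+1 - j) (hop_dd s z) ((s^-1)%g z).
Proof.
elim: j => [|j IH] hj; first by rewrite subn0 hop_dd_iter_last.
rewrite iterS IH; last by lia.
have -> : (run_len s z).+1 - j = ((run_len s z).+1 - j.+1).+1 by lia.
by rewrite iterS permK.
Qed.

Lemma run_len_hop_ddV : run_len ((hop_dd s z)^-1)%g z = run_len s z.
Proof.
have [len_gt0 len_lt _ _] := run_len_spec; have [_ zV _ _] := run_end_bounds.
have [_ _ below _] := run_len_spec.
apply: find_iota0 => // [|i hi].
  by rewrite iter_hop_ddV // subnn ltnW.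
rewrite iter_hop_ddV; last by lia.
by rewrite hop_dd_iter -?ltnNge; [apply: below|]; lia.
Qed.

Lemma run_end_hop_ddV : run_end ((hop_dd s z)^-1)%g z = s z.
Proof.
rewrite /run_end run_len_hop_ddV iter_hop_ddV //.
by rewrite subSnn /= hop_ddE eqxx.
Qed.

Lemma ctype_hop_dd w : w != z -> ctype (hop_dd s z) w = ctype s w.
Proof.
move=> wz; have [ez zV sz zse] := run_end_bounds.
rewrite /ctype hop_ddE hop_ddVE (negbTE wz); congr pair.
  case: eqVneq => [->|w1]; first by rewrite permK; lia.
  by case: eqVneq => [->|//]; rewrite permK; lia.
case: eqVneq => [->|w1]; first by rewrite permKV; lia.
by case: eqVneq => [->|//]; lia.
Qed.

Lemma derangement_hop_dd : derangement s -> derangement (hop_dd s z).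
Proof.
move=> /forallP der; have [ez zV sz zse] := run_end_bounds.
apply/forallP => w; rewrite hop_ddE.
case: (eqVneq w ((s^-1)%g z)) => [->|_]; first by rewrite ord_ltn_eqF //; lia.
case: (eqVneq w (run_end s z)) => [->|_]; first by rewrite ord_gtn_eqF.
case: (eqVneq w z) => [->|_]; last exact: der.
by rewrite ord_gtn_eqF.
Qed.

Lemma hop_dd_mem_porbit w : hop_dd s z w \in porbit s w.
Proof.
rewrite hop_ddE; case: eqVneq => [->|_].
  by apply/porbitP; exists 2; rewrite expgS expg1 permM permKV.
case: eqVneq => [->|_]; first by rewrite porbit_sym /run_end -permX mem_porbit.
case: eqVneq => [->|_]; first by rewrite /run_end -iterS -permX mem_porbit.
exact: mem_porbit1.
Qed.

Lemma mem_porbit_hop_dd w : s w \in porbit (hop_dd s z) w.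
Proof.
have [ez zV _ _] := run_end_bounds.
have hop_sV : hop_dd s z ((s^-1)%g z) = s z by rewrite hop_ddE eqxx.
case: (eqVneq w ((s^-1)%g z)) => [->|w1].
  by rewrite permKV -{1}hop_dd_iter_last -permX mem_porbit.
case: (eqVneq w (run_end s z)) => [->|w2].
  apply/porbitP; exists 2; rewrite expgS expg1 permM -hop_dd_z.
  by rewrite [hop_dd s z (run_end s z)]hop_ddE ord_ltn_eqF ?eqxx //; lia.
case: (eqVneq w z) => [->|w3].
  have /eqP -> : porbit (hop_dd s z) z == porbit (hop_dd s z) ((s^-1)%g z).
    by rewrite eq_porbit_mem -{1}hop_dd_iter_last -permX mem_porbit.
  by rewrite -hop_sV mem_porbit1.
have -> : s w = hop_dd s z w by rewrite hop_ddE (negbTE w1) (negbTE w2) (negbTE w3).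
exact: mem_porbit1.
Qed.

Lemma cyc_hop_dd : cyc (hop_dd s z) = cyc s.
Proof. by rewrite /cyc (porbits_eq_mem hop_dd_mem_porbit mem_porbit_hop_dd). Qed.

End DoubleDescent.

Lemma hop_ddK s z : cdd s z -> hop_dd ((hop_dd s z)^-1)%g z = (s^-1)%g.
Proof.
move=> dd; have ddV : cdd ((hop_dd s z)^-1)%g z by rewrite cdd_inv cda_hop_dd.
apply/permP => w; rewrite (hop_ddE ddV) invgK (run_end_hop_ddV dd).
rewrite (hop_dd_z dd) (hop_ddV_z dd) (hop_ddVE dd).
case: (eqVneq w (s (run_end s z))) => [->|w1]; first by rewrite permK.
case: (eqVneq w (s z)) => [->|w2]; first by rewrite permK.
case: (eqVneq w z) => [->|w3]; first by rewrite eqxx.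
by rewrite (hop_ddVE dd) (negbTE w1) (negbTE w2) (negbTE w3).
Qed.

Lemma hop_cdd s z : cdd s z -> hop s z = hop_dd s z.
Proof. by rewrite /hop => ->. Qed.

Lemma hop_cda s z : cda s z -> hop s z = ((hop_dd (s^-1)%g z)^-1)%g.
Proof. by move=> da; rewrite /hop (negbTE (cda_cdd_excl da)) da. Qed.

Variant hop_spec s z : 'S_n -> Type :=
  | HopCdd of cdd s z : hop_spec s z (hop_dd s z)
  | HopCda of cda s z : hop_spec s z ((hop_dd (s^-1)%g z)^-1)%g
  | HopNone of ~~ cdd s z & ~~ cda s z : hop_spec s z s.

Lemma hopP s z : hop_spec s z (hop s z).
Proof.
rewrite /hop; case: ifP => [dd|/negbT ndd]; first exact: HopCdd.
by case: ifP => [da|/negbT nda]; [apply: HopCda | apply: HopNone].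
Qed.

Lemma hopK z : involutive (hop ^~ z).
Proof.
move=> s; case: (hopP s z) => [dd|da|ndd nda].
- by rewrite hop_cda ?cda_hop_dd // hop_ddK // invgK.
- have ddV : cdd (s^-1)%g z by rewrite cdd_inv.
  by rewrite hop_cdd ?cdd_inv ?cda_hop_dd // hop_ddK // invgK.
- by rewrite /hop (negbTE ndd) (negbTE nda).
Qed.

Lemma cdd_hop s z : cdd (hop s z) z = cda s z.
Proof.
case: hopP => [dd|da|ndd nda].
- rewrite (negbTE (cda_cdd_excl (cda_hop_dd dd))).
  by rewrite (contraTF (@cda_cdd_excl _ _) dd).
- by rewrite cdd_inv cda_hop_dd ?cdd_inv.
- by rewrite (negbTE ndd) (negbTE nda).
Qed.

Lemma ctype_inv s w : ctype (s^-1)%g w = ((ctype s w).2, (ctype s w).1).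
Proof. by rewrite /ctype invgK. Qed.

Lemma ctype_hop s z w : w != z -> ctype (hop s z) w = ctype s w.
Proof.
move=> wz; case: hopP => [dd|da|//]; first exact: ctype_hop_dd.
by rewrite ctype_inv ctype_hop_dd ?cdd_inv // ctype_inv; case: ctype.
Qed.

Lemma derangement_inv s : derangement (s^-1)%g = derangement s.
Proof.
apply/forallP/forallP => der w; apply: contra (der w) => /eqP e.
  by rewrite -{1}e permK.
by rewrite -{1}e permKV.
Qed.

Lemma derangement_hop s z : derangement (hop s z) = derangement s.
Proof.
suff der_hop r : derangement r -> derangement (hop r z).
  by apply/idP/idP => [/der_hop|/der_hop //]; rewrite hopK.
move=> der; case: hopP => [dd|da|//]; first exact: derangement_hop_dd.
by rewrite derangement_inv derangement_hop_dd ?cdd_inv ?derangement_inv.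
Qed.

Lemma cyc_inv s : cyc (s^-1)%g = cyc s.
Proof. by rewrite /cyc porbitsV. Qed.

Lemma cyc_hop s z : cyc (hop s z) = cyc s.
Proof.
case: hopP => [dd|da|//]; first exact: cyc_hop_dd.
by rewrite cyc_inv cyc_hop_dd ?cdd_inv // cyc_inv.
Qed.

End CyclicHop.

(** * Merging double descents into double ascents *)

Local Open Scope ring_scope.

Definition merge_cdd (R : nmodType) (f : bool * bool -> R) (c : bool * bool) : R :=
  match c with
  | (true, false) => f (true, false) + f (false, true)
  | (false, true) => 0
  | _ => f c
  end.

Section HopSum.
Variables (R : comNzRingType) (n : nat) (P : pred 'S_n) (g : 'S_n -> R).
Hypotheses (P_hop : forall s z, P (hop s z) = P s)
           (g_hop : forall s z, g (hop s z) = g s).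
Variable f : bool * bool -> R.

Lemma sum_merge_cdd_at (A : 'S_n -> R) z : (forall s, A (hop s z) = A s) ->
  \sum_(s | P s) A s * f (ctype s z) = \sum_(s | P s) A s * merge_cdd f (ctype s z).
Proof.
move=> A_hop; apply/eqP; rewrite -subr_eq0 -sumrB.
have merge_defect c : f c - merge_cdd f c =
    f (false, true) * ((c == (false, true))%:R - (c == (true, false))%:R).
  by case: c => [[] []] /=; ring.
under eq_bigr => s _ do
  rewrite -mulrBr merge_defect ctype_cdd ctype_cda mulrCA mulrBr.
rewrite -mulr_sumr sumrB.
suff -> : \sum_(s | P s) A s * (cdd s z)%:R = \sum_(s | P s) A s * (cda s z)%:R.
  by rewrite subrr mulr0.
rewrite (reindex_inj (inv_inj (hopK z))).
by apply: eq_big => [s|s _]; rewrite ?P_hop // A_hop cdd_hop.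
Qed.

Definition merged_upto k s :=
  g s * \prod_(w : 'I_n) (if (w < k)%N then merge_cdd f else f) (ctype s w).

Lemma sum_merged_upto_step k : (k < n)%N ->
  \sum_(s | P s) merged_upto k s = \sum_(s | P s) merged_upto k.+1 s.
Proof.
move=> lt_kn; pose z := Ordinal lt_kn.
pose A s :=
  g s * \prod_(w | w != z) (if (w < k)%N then merge_cdd f else f) (ctype s w).
have A_hop s : A (hop s z) = A s.
  by rewrite /A g_hop; congr (_ * _); apply: eq_bigr => w wz; rewrite ctype_hop.
have merged_k s : merged_upto k s = A s * f (ctype s z).
  by rewrite /merged_upto (bigD1 z) //= ltnn /= /A; ring.
have merged_k1 s : merged_upto k.+1 s = A s * merge_cdd f (ctype s z).
  have lt_k1 (w : 'I_n) : w != z -> (w < k.+1)%N = (w < k)%N.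
    move=> wz; rewrite ltnS leq_eqVlt; case: eqP => // wk.
    by case/eqP: wz; apply: val_inj.
  rewrite /merged_upto (bigD1 z) //= ltnSn /=.
  under eq_bigr => w wz do rewrite (lt_k1 w wz).
  by rewrite /A; ring.
under eq_bigr => s _ do rewrite merged_k.
under [RHS]eq_bigr => s _ do rewrite merged_k1.
exact: sum_merge_cdd_at.
Qed.

Lemma sum_merge_cdd :
  \sum_(s | P s) g s * \prod_(w : 'I_n) f (ctype s w) =
  \sum_(s | P s) g s * \prod_(w : 'I_n) merge_cdd f (ctype s w).
Proof.
have -> : \sum_(s | P s) g s * \prod_(w : 'I_n) merge_cdd f (ctype s w) =
          \sum_(s | P s) merged_upto n s.
  apply: eq_bigr => s _; rewrite /merged_upto; congr (_ * _).
  by apply: eq_bigr => w _; rewrite ltn_ord.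
suff : forall k, (k <= n)%N ->
    \sum_(s | P s) merged_upto 0 s = \sum_(s | P s) merged_upto k s.
  by apply.
elim=> [//|k IH] lt_kn.
by rewrite IH ?(ltnW lt_kn) // sum_merged_upto_step.
Qed.

End HopSum.

(* In a derangement, a false second bit of the type marks an excedance. *)
Definition cpk_exc_weight (R : comNzRingType) (x t : R) (c : bool * bool) : R :=
  (if c.1 && c.2 then x else 1) * (if c.2 then 1 else t).

Section Derangement.
Variables (n : nat) (s : 'S_n).
Hypothesis der : derangement s.

Lemma derangement_ltnNgt w : (s w < w)%N = ~~ (w < s w)%N.
Proof.
have sw : (s w == w :> nat) = false := negbTE (forallP der w).
by rewrite ltn_neqAle sw leqNgt.
Qed.

Lemma cpk_exc_prod (R : comNzRingType) (x t : R) :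
  x ^+ cpk s * t ^+ exc s = \prod_(w : 'I_n) cpk_exc_weight x t (ctype s w).
Proof.
rewrite big_split /=; congr (_ * _).
  by rewrite -big_mkcond prodr_const /cpk cardsE.
under eq_bigr => w _ do rewrite /= derangement_ltnNgt if_neg.
by rewrite -big_mkcond prodr_const /exc cardsE.
Qed.

Lemma sum_ctype_bits : (\sum_(w : 'I_n) ((ctype s w).1 + (ctype s w).2))%N = n.
Proof.
rewrite big_split /= (reindex_inj (@perm_inj _ s)) /=.
under eq_bigr => w _ do rewrite permK.
rewrite -big_split /=.
rewrite (eq_bigr (fun _ => 1%N)) ?sum1_card ?card_ord // => w _.
by rewrite derangement_ltnNgt; case: (_ < _)%N.
Qed.

Lemma prod_ctype_scale (F : fieldType) (h k : bool * bool -> F) (b c : F) :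
  b != 0 -> (forall cw, h cw * b ^+ (cw.1 + cw.2) = c * k cw * b) ->
  \prod_(w : 'I_n) h (ctype s w) = c ^+ n * \prod_(w : 'I_n) k (ctype s w).
Proof.
move=> b0 hk; apply: (mulIf (expf_neq0 n b0)).
have bits : b ^+ n = \prod_(w : 'I_n) b ^+ ((ctype s w).1 + (ctype s w).2).
  by rewrite prodrXr sum_ctype_bits.
rewrite {1}bits -big_split /=.
under eq_bigr => w _ do rewrite hk.
by rewrite !big_split /= !prodr_const card_ord.
Qed.

Hypothesis n_gt0 : (0 < n)%N.

Lemma exc_gt0 : (0 < exc s)%N.
Proof.
rewrite card_gt0; apply/set0Pn; exists (Ordinal n_gt0); rewrite inE lt0n.
exact: (forallP der (Ordinal n_gt0)).
Qed.

Lemma cpk_gt0 : (0 < cpk s)%N.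
Proof.
have lt_last : (n.-1 < n)%N by rewrite prednK.
pose m := Ordinal lt_last.
have lt_m (r : 'I_n) : r != m -> (r < m)%N.
  by move=> rm; rewrite ltn_neqAle -ltnS prednK // ltn_ord andbT; apply: rm.
rewrite card_gt0; apply/set0Pn; exists m; rewrite inE.
apply/andP; split; apply: lt_m.
  by rewrite -(inj_eq (@perm_inj _ s)) permKV eq_sym (forallP der m).
exact: (forallP der m).
Qed.

End Derangement.

Lemma sum_derangement_merge_cdd (R : comNzRingType) n (q : R) (f : bool * bool -> R) :
  \sum_(s : 'S_n | derangement s) q ^+ cyc s * \prod_(w : 'I_n) f (ctype s w) =
  \sum_(s : 'S_n | derangement s) q ^+ cyc s * \prod_(w : 'I_n) merge_cdd f (ctype s w).
Proof. by apply: sum_merge_cdd => s z; rewrite (derangement_hop, cyc_hop). Qed.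

Theorem D_cyc_exc_via_cpk (F : fieldType) n (q x t : F) : (0 < n)%N ->
  1 + x != 0 -> x + t != 0 -> 1 + x * t != 0 ->
  D_cyc_exc n q t =
    ((1 + x * t) / (1 + x)) ^+ n *
    P_cyc_cpk_exc n q ((1 + x) ^+ 2 * t / ((x + t) * (1 + x * t)))
                      ((x + t) / (1 + x * t)).
Proof.
move=> n_gt0 x1 xt xt1.
(* At t = 0 the scaling factor of [prod_ctype_scale] vanishes. *)
have [->|t0] := eqVneq t 0.
  rewrite /D_cyc_exc /P_cyc_cpk_exc !big1 ?mulr0 // => s der.
    by rewrite mul0r expr0n gtn_eqF ?cpk_gt0 // mulr0 mul0r.
  by rewrite expr0n gtn_eqF ?exc_gt0 // mulr0.
set X := (1 + x) ^+ 2 * t / _; set T := (x + t) / _; set c := (1 + x * t) / _.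
have D_merged : D_cyc_exc n q t = \sum_(s : 'S_n | derangement s)
    q ^+ cyc s * \prod_(w : 'I_n) merge_cdd (cpk_exc_weight 1 t) (ctype s w).
  rewrite /D_cyc_exc -sum_derangement_merge_cdd; apply: eq_bigr => s der.
  by rewrite -cpk_exc_prod // expr1n mul1r.
have P_merged : P_cyc_cpk_exc n q X T = \sum_(s : 'S_n | derangement s)
    q ^+ cyc s * \prod_(w : 'I_n) merge_cdd (cpk_exc_weight X T) (ctype s w).
  rewrite /P_cyc_cpk_exc -sum_derangement_merge_cdd; apply: eq_bigr => s der.
  by rewrite -mulrA cpk_exc_prod.
rewrite D_merged P_merged mulr_sumr; apply: eq_bigr => s der.
rewrite mulrCA; congr (_ * _).
have b0 : (1 + x) * t / (x + t) != 0 by rewrite !mulf_neq0 ?invr_eq0.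
apply: (prod_ctype_scale der b0) => -[[] []];
  by rewrite /merge_cdd /cpk_exc_weight /X /T /c /=; field; rewrite ?x1 ?xt ?xt1.
Qed.

Theorem P_cyc_cpk_exc_via_D (F : fieldType) n (q x t u v : F) : (0 < n)%N ->
  x != 0 -> t != 0 -> 1 + u * v != 0 ->
  u + v = t * (1 + u * v) -> (1 + u) ^+ 2 * v = x * t * (1 + u * v) ^+ 2 ->
  P_cyc_cpk_exc n q x t = ((1 + u) / (1 + u * v)) ^+ n * D_cyc_exc n q v.
Proof.
move=> n_gt0 x0 t0 uv1 sum_uv sqr_uv.
have uv0 : u + v != 0 by rewrite sum_uv mulf_neq0.
have u1 : 1 + u != 0.
  apply/eqP => u1; move: sqr_uv; rewrite u1 expr0n mul0r => /esym/eqP.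
  by apply/negP; rewrite !mulf_neq0 // expf_neq0.
rewrite (@D_cyc_exc_via_cpk _ n q u v n_gt0 u1 uv0 uv1).
have -> : (1 + u) ^+ 2 * v / ((u + v) * (1 + u * v)) = x.
  by rewrite sqr_uv sum_uv; field; rewrite t0 uv1.
have -> : (u + v) / (1 + u * v) = t by rewrite sum_uv mulfK.
rewrite mulrA -exprMn.
have -> : (1 + u) / (1 + u * v) * ((1 + u * v) / (1 + u)) = 1 by field; rewrite u1 uv1.
by rewrite expr1n mul1r.
Qed.

Lemma mul_adjoin_root (R : comNzRingType) (s d p0 p1 r0 r1 : R) : s ^+ 2 = d ->
  (p0 + p1 * s) * (r0 + r1 * s) = (p0 * r0 + p1 * r1 * d) + (p0 * r1 + p1 * r0) * s.
Proof. by move=> <-; ring. Qed.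

Lemma root_uv_identities (F : fieldType) (x t s : F) :
  2%:R != 0 :> F -> x != 0 -> x != 1 -> t != 0 ->
  s ^+ 2 = (1 + t) ^+ 2 - 4%:R * x * t ->
  let u := (1 + t ^+ 2 - 2%:R * x * t - (1 - t) * s) / (2%:R * (1 - x) * t) in
  let v := ((1 + t) ^+ 2 - 2%:R * x * t - (1 + t) * s) / (2%:R * x * t) in
  u + v = t * (1 + u * v) /\ (1 + u) ^+ 2 * v = x * t * (1 + u * v) ^+ 2.
Proof.
move=> two0 x0 x1 t0 hs u v.
set d := (1 + t) ^+ 2 - _ in hs.
set D1 := 2%:R * (1 - x) * t; set D2 := 2%:R * x * t.
have D10 : D1 != 0 by rewrite !mulf_neq0 // subr_eq0 eq_sym.
have D20 : D2 != 0 by rewrite !mulf_neq0.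
set a := 1 + t ^+ 2 - D2; set b := - (1 - t).
set c := (1 + t) ^+ 2 - D2; set e := - (1 + t).
have -> : u = (a + b * s) / D1 by rewrite /u /a /b /D2; congr (_ / _); ring.
have -> : v = (c + e * s) / D2 by rewrite /v /c /e /D2; congr (_ / _); ring.
(* After clearing denominators, each numerator reduces to p + q s with
   p and q vanishing as polynomials in x and t. *)
have uv_num : D1 * D2 + (a + b * s) * (c + e * s) =
    (D1 * D2 + a * c + b * e * d) + (a * e + b * c) * s.
  by rewrite (mul_adjoin_root _ _ _ _ hs); ring.
split; apply/eqP; rewrite -subr_eq0; apply/eqP.
  have -> : (a + b * s) / D1 + (c + e * s) / D2 -
      t * (1 + (a + b * s) / D1 * ((c + e * s) / D2)) =
    ((a + b * s) * D2 + (c + e * s) * D1 - t * (D1 * D2 + (a + b * s) * (c + e * s)))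
      / (D1 * D2) by field; rewrite D10 D20.
  rewrite (mul_adjoin_root _ _ _ _ hs) /a /b /c /e /d /D1 /D2.
  by apply/eqP; rewrite mulf_eq0; apply/orP; left; apply/eqP; ring.
have -> : (1 + (a + b * s) / D1) ^+ 2 * ((c + e * s) / D2) -
    x * t * (1 + (a + b * s) / D1 * ((c + e * s) / D2)) ^+ 2 =
  (((D1 + a) + b * s) ^+ 2 * (c + e * s) * D2 -
    x * t * (D1 * D2 + (a + b * s) * (c + e * s)) ^+ 2) / (D1 ^+ 2 * D2 ^+ 2).
  by field; rewrite D10 D20.
rewrite uv_num !expr2 !(mul_adjoin_root _ _ _ _ hs) /a /b /c /e /d /D1 /D2.
by apply/eqP; rewrite mulf_eq0; apply/orP; left; apply/eqP; ring.
Qed.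

Theorem theorem3p9 (n : nat) (hn : (1 <= n)%N) :
  (* first form: identity of rational functions in q, x, t, stated pointwise
     over an arbitrary field wherever the denominators do not vanish *)
  (forall (F : fieldType) (q x t : F),
      1 + x != 0 -> x + t != 0 -> 1 + x * t != 0 ->
      D_cyc_exc n q t =
        ((1 + x * t) / (1 + x)) ^+ n *
        P_cyc_cpk_exc n q ((1 + x) ^+ 2 * t / ((x + t) * (1 + x * t)))
                          ((x + t) / (1 + x * t)))
  /\
  (* equivalent form, with the square root taken in a real closed field *)
  (forall (R : rcfType) (q x t : R),
      x != 0 -> x != 1 -> t != 0 -> 0 <= (1 + t) ^+ 2 - 4%:R * x * t ->
      let s := Num.sqrt ((1 + t) ^+ 2 - 4%:R * x * t) in
      let u := (1 + t ^+ 2 - 2%:R * x * t - (1 - t) * s) / (2%:R * (1 - x) * t) in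
      let v := ((1 + t) ^+ 2 - 2%:R * x * t - (1 + t) * s) / (2%:R * x * t) in
      1 + u * v != 0 ->
      P_cyc_cpk_exc n q x t = ((1 + u) / (1 + u * v)) ^+ n * D_cyc_exc n q v).
Proof.
split=> [F q x t|R q x t x0 x1 t0 disc_ge0 s u v uv1].
  exact: D_cyc_exc_via_cpk.
have two0 : 2%:R != 0 :> R by rewrite pnatr_eq0.
have [sum_uv sqr_uv] := root_uv_identities two0 x0 x1 t0 (sqr_sqrtr disc_ge0).
exact: P_cyc_cpk_exc_via_D.
Qed.
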